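(* Suppose a total preorder $\succeq$ on $\mathcal{Q}_b$ is continuous (with respect to uniform convergence), monotonic, and satisfies the dual independence axiom. Then there exists a continuous linear functional on the Banach space $B((0,1],\Sigma)$ whose restriction to $\mathcal{Q}_b$ is a numerical representation of $\succeq$.
   Context: $\mathcal{Q}_b$ is the set of bounded, nondecreasing, left-continuous functions on $(0,1]$. $\Sigma$ is the algebra of subsets of $(0,1]$ generated by finite unions and intersections of intervals $(a,b]$ with $0<a<b\le1$. A simple function is $\sum_{i=1}^n\alpha_i\mathbf{1}_{A_i}$ with $\alpha_i\in\mathbb{R}$ and disjoint $A_i\in\Sigma$. $B((0,1],\Sigma)$ is the space of bounded functions on $(0,1]$ that are uniform limits of simple functions, with norm $\|\Phi\|=\sup_{0<p\le1}|\Phi(p)|$; it contains $\mathcal{Q}_b$. A total preorder is reflexive, transitive, complete; $\sim,\succ$ are its indifference and strict parts; continuous means the sets $\{\Psi:\Psi\succeq\Phi\}$ and $\{\Psi:\Phi\succeq\Psi\}$ are closed for each $\Phi$. Monotonic: $\Phi(p)\ge\Psi(p)$ for all $p$ implies $\Phi\succeq\Psi$. Dual independence axiom: $\Phi\succ\Psi$ implies $\alpha\Phi+(1-\alpha)\Upsilon\succ\alpha\Psi+(1-\alpha)\Upsilon$ for all $\Upsilon\in\mathcal{Q}_b$, $\alpha\in(0,1)$. $U$ is a numerical representation if $\Phi\succ\Psi\iff U(\Phi)>U(\Psi)$. *)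

From Stdlib Require Import Reals List.
Open Scope R_scope.

(* Functions on (0,1] are represented as R -> R; only values on (0,1] matter. *)
Definition unit_int (p : R) : Prop := 0 < p <= 1.

Definition bounded_on (f : R -> R) : Prop :=
  exists M, forall p, unit_int p -> Rabs (f p) <= M.

Definition nondecreasing_on (f : R -> R) : Prop :=
  forall p q, unit_int p -> unit_int q -> p <= q -> f p <= f q.

Definition left_continuous_on (f : R -> R) : Prop :=
  forall p, unit_int p -> forall eps, 0 < eps ->
    exists delta, 0 < delta /\
      forall q, 0 < q -> q <= p -> p - q < delta -> Rabs (f q - f p) < eps.

Definition in_Qb (f : R -> R) : Prop :=
  bounded_on f /\ nondecreasing_on f /\ left_continuous_on f.

Inductive in_Sigma : (R -> Prop) -> Prop :=
| Sigma_int : forall a b, 0 < a -> a < b -> b <= 1 ->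
    in_Sigma (fun p => a < p <= b)
| Sigma_union : forall A B, in_Sigma A -> in_Sigma B ->
    in_Sigma (fun p => A p \/ B p)
| Sigma_inter : forall A B, in_Sigma A -> in_Sigma B ->
    in_Sigma (fun p => A p /\ B p)
| Sigma_compl : forall A, in_Sigma A ->
    in_Sigma (fun p => unit_int p /\ ~ A p).

Definition dflt_piece : R * (R -> Prop) := (0, fun _ => False).

Definition simple_fn (s : R -> R) : Prop :=
  exists l : list (R * (R -> Prop)),
    Forall (fun c => in_Sigma (snd c)) l /\
    (forall i j, (i < length l)%nat -> (j < length l)%nat -> i <> j ->
       forall p, ~ (snd (nth i l dflt_piece) p /\ snd (nth j l dflt_piece) p)) /\
    (forall p, unit_int p ->
       ((forall c, In c l -> ~ snd c p) -> s p = 0) /\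
       (forall c, In c l -> snd c p -> s p = fst c)).

Definition in_B (f : R -> R) : Prop :=
  bounded_on f /\
  forall eps, 0 < eps -> exists s, simple_fn s /\
    forall p, unit_int p -> Rabs (f p - s p) <= eps.

(* Continuous (= bounded) linear functional on B, with the sup norm. *)
Definition cont_linear_functional (L : (R -> R) -> R) : Prop :=
  (forall f g a b, in_B f -> in_B g ->
     L (fun p => a * f p + b * g p) = a * L f + b * L g) /\
  (exists C, forall f M, in_B f -> (forall p, unit_int p -> Rabs (f p) <= M) ->
     Rabs (L f) <= C * M).

Definition strict (pref : (R -> R) -> (R -> R) -> Prop) f g : Prop :=
  pref f g /\ ~ pref g f.

Definition total_preorder_Qb (pref : (R -> R) -> (R -> R) -> Prop) : Prop :=
  (forall f, in_Qb f -> pref f f) /\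
  (forall f g h, in_Qb f -> in_Qb g -> in_Qb h -> pref f g -> pref g h -> pref f h) /\
  (forall f g, in_Qb f -> in_Qb g -> pref f g \/ pref g f).

Definition unif_conv (fs : nat -> R -> R) (f : R -> R) : Prop :=
  forall eps, 0 < eps -> exists N, forall n, (n >= N)%nat ->
    forall p, unit_int p -> Rabs (fs n p - f p) <= eps.

(* Closedness of upper and lower contour sets in Q_b w.r.t. uniform convergence
   (sequential closedness, equivalent to closedness in this metric space). *)
Definition continuous_pref (pref : (R -> R) -> (R -> R) -> Prop) : Prop :=
  forall phi, in_Qb phi ->
    forall (psis : nat -> R -> R) psi,
      (forall n, in_Qb (psis n)) -> in_Qb psi -> unif_conv psis psi ->
      ((forall n, pref (psis n) phi) -> pref psi phi) /\
      ((forall n, pref phi (psis n)) -> pref phi psi).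

Definition monotonic_pref (pref : (R -> R) -> (R -> R) -> Prop) : Prop :=
  forall f g, in_Qb f -> in_Qb g ->
    (forall p, unit_int p -> f p >= g p) -> pref f g.

Definition dual_independence (pref : (R -> R) -> (R -> R) -> Prop) : Prop :=
  forall f g h a, in_Qb f -> in_Qb g -> in_Qb h -> 0 < a < 1 ->
    strict pref f g ->
    strict pref (fun p => a * f p + (1 - a) * h p) (fun p => a * g p + (1 - a) * h p).

Definition represents_on_Qb (U : (R -> R) -> R) (pref : (R -> R) -> (R -> R) -> Prop) : Prop :=
  forall f g, in_Qb f -> in_Qb g -> (strict pref f g <-> U f > U g).

(* If no constant function is strictly preferred to another, monotonicity
   makes all of Q_b indifferent and the zero functional represents the preference.
   Otherwise dual independence spreads one strict comparison of constants to all of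
   them, so the preference is strictly increasing on constants.  Then every Phi in
   Q_b has a unique certainty equivalent CE(Phi) (the constant indifferent to Phi,
   found as a supremum, using continuity); CE represents the preference, and dual
   independence together with continuity make CE additive and positively homogeneous
   on the cone Q_b.  Consequently CE g - CE h depends only on the difference g - h and
   is 1-Lipschitz in it for the sup norm.  Every element of B((0,1],Sigma) is a uniform
   limit of such differences (indicators of sets of Sigma are differences of step
   functions, and differences of elements of Q_b form an algebra), so this functional
   extends by uniform continuity to the required L, which agrees with CE on Q_b. *)

From Stdlib Require Import Reals List Lra Lia Classical ClassicalEpsilon FunctionalExtensionality.
Open Scope R_scope.

Definition cst (c : R) : R -> R := fun _ => c.
Definition mix (a : R) (f g : R -> R) : R -> R := fun p => a * f p + (1 - a) * g p.

Lemma unit_one : unit_int 1.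
Proof. unfold unit_int; lra. Qed.

Lemma Rabs_le_inv x M : Rabs x <= M -> -M <= x <= M.
Proof. unfold Rabs; destruct Rcase_abs; lra. Qed.

Lemma bound_nonneg f M : (forall p, unit_int p -> Rabs (f p) <= M) -> 0 <= M.
Proof. intros H. specialize (H 1 unit_one). pose proof (Rabs_pos (f 1)). lra. Qed.

Lemma inv_succ_pos n : 0 < / (INR n + 1).
Proof. apply Rinv_0_lt_compat; pose proof (pos_INR n); lra. Qed.

Lemma unif_conv_of_bound (fs : nat -> R -> R) f :
  (forall n p, unit_int p -> Rabs (fs n p - f p) <= / (INR n + 1)) -> unif_conv fs f.
Proof.
  intros H eps He. destruct (archimed_cor1 eps He) as [N [HN1 HN2]].
  exists N. intros n Hn p Hp. eapply Rle_trans; [apply H; auto|].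
  left. eapply Rle_lt_trans; [|exact HN1].
  apply Rinv_le_contravar; [apply lt_0_INR; lia|].
  assert (INR N <= INR n) by (apply le_INR; lia). lra.
Qed.

Lemma Qb_const c : in_Qb (cst c).
Proof.
  unfold in_Qb, cst; repeat split.
  - exists (Rabs c); intros; apply Rle_refl.
  - intros p q _ _ _; apply Rle_refl.
  - intros p _ eps He. exists 1; split; [lra|]. intros.
    replace (c - c) with 0 by ring. rewrite Rabs_R0; lra.
Qed.

Lemma Qb_lin f g a b : in_Qb f -> in_Qb g -> 0 <= a -> 0 <= b ->
  in_Qb (fun p => a * f p + b * g p).
Proof.
  intros [[M1 HM1] [Hm1 Hc1]] [[M2 HM2] [Hm2 Hc2]] Ha Hb.
  repeat split.
  - exists (a * M1 + b * M2). intros p Hp.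
    eapply Rle_trans; [apply Rabs_triang|].
    rewrite !Rabs_mult, (Rabs_pos_eq a Ha), (Rabs_pos_eq b Hb).
    specialize (HM1 p Hp); specialize (HM2 p Hp).
    pose proof (Rmult_le_compat_l a _ _ Ha HM1). pose proof (Rmult_le_compat_l b _ _ Hb HM2). lra.
  - intros p q Hp Hq Hpq. specialize (Hm1 p q Hp Hq Hpq); specialize (Hm2 p q Hp Hq Hpq).
    pose proof (Rmult_le_compat_l a _ _ Ha Hm1). pose proof (Rmult_le_compat_l b _ _ Hb Hm2). lra.
  - intros p Hp eps He.
    (* each summand is made eps/2-close at the left of p *)
    set (e1 := eps / (2 * (a + 1))). set (e2 := eps / (2 * (b + 1))).
    assert (He1 : (a + 1) * e1 = eps / 2) by (unfold e1; field; lra).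
    assert (He2 : (b + 1) * e2 = eps / 2) by (unfold e2; field; lra).
    assert (P1 : 0 < e1) by (unfold e1; apply Rdiv_lt_0_compat; lra).
    assert (P2 : 0 < e2) by (unfold e2; apply Rdiv_lt_0_compat; lra).
    destruct (Hc1 p Hp e1 P1) as [d1 [Hd1 H1]].
    destruct (Hc2 p Hp e2 P2) as [d2 [Hd2 H2]].
    exists (Rmin d1 d2). split; [apply Rmin_pos; lra|].
    intros q Hq0 Hqp Hd.
    assert (E1 := H1 q Hq0 Hqp (Rlt_le_trans _ _ _ Hd (Rmin_l _ _))).
    assert (E2 := H2 q Hq0 Hqp (Rlt_le_trans _ _ _ Hd (Rmin_r _ _))).
    replace (a * f q + b * g q - (a * f p + b * g p))
      with (a * (f q - f p) + b * (g q - g p)) by ring.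
    eapply Rle_lt_trans; [apply Rabs_triang|].
    rewrite !Rabs_mult, (Rabs_pos_eq a Ha), (Rabs_pos_eq b Hb).
    pose proof (Rmult_le_compat_l a _ _ Ha (Rlt_le _ _ E1)).
    pose proof (Rmult_le_compat_l b _ _ Hb (Rlt_le _ _ E2)). nra.
Qed.

Lemma Qb_add f g : in_Qb f -> in_Qb g -> in_Qb (fun p => f p + g p).
Proof.
  intros Hf Hg. replace (fun p => f p + g p) with (fun p => 1 * f p + 1 * g p).
  - apply Qb_lin; auto; lra.
  - apply functional_extensionality; intros; ring.
Qed.

Lemma Qb_scale t f : 0 <= t -> in_Qb f -> in_Qb (fun p => t * f p).
Proof.
  intros Ht Hf. replace (fun p => t * f p) with (fun p => t * f p + 0 * cst 0 p).
  - apply Qb_lin; auto using Qb_const; lra.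
  - apply functional_extensionality; intros; unfold cst; ring.
Qed.

Lemma Qb_mix a f g : 0 <= a <= 1 -> in_Qb f -> in_Qb g -> in_Qb (mix a f g).
Proof. intros Ha Hf Hg. apply Qb_lin; auto; lra. Qed.

Lemma Qb_mul f g : in_Qb f -> in_Qb g ->
  (forall p, unit_int p -> 0 <= f p) -> (forall p, unit_int p -> 0 <= g p) ->
  in_Qb (fun p => f p * g p).
Proof.
  intros [[M1 HM1] [Hm1 Hc1]] [[M2 HM2] [Hm2 Hc2]] Hf0 Hg0.
  assert (M1p := bound_nonneg _ _ HM1). assert (M2p := bound_nonneg _ _ HM2).
  repeat split.
  - exists (M1 * M2). intros p Hp. rewrite Rabs_mult.
    apply Rmult_le_compat; auto using Rabs_pos.
  - intros p q Hp Hq Hpq. apply Rmult_le_compat; auto.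
  - intros p Hp eps He.
    set (e1 := eps / (2 * (M2 + 1))). set (e2 := eps / (2 * (M1 + 1))).
    assert (He1 : (M2 + 1) * e1 = eps / 2) by (unfold e1; field; lra).
    assert (He2 : (M1 + 1) * e2 = eps / 2) by (unfold e2; field; lra).
    assert (P1 : 0 < e1) by (unfold e1; apply Rdiv_lt_0_compat; lra).
    assert (P2 : 0 < e2) by (unfold e2; apply Rdiv_lt_0_compat; lra).
    destruct (Hc1 p Hp e1 P1) as [d1 [Hd1 H1]].
    destruct (Hc2 p Hp e2 P2) as [d2 [Hd2 H2]].
    exists (Rmin d1 d2). split; [apply Rmin_pos; lra|].
    intros q Hq0 Hqp Hd.
    assert (Hq : unit_int q) by (destruct Hp; split; lra).
    assert (E1 := H1 q Hq0 Hqp (Rlt_le_trans _ _ _ Hd (Rmin_l _ _))).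
    assert (E2 := H2 q Hq0 Hqp (Rlt_le_trans _ _ _ Hd (Rmin_r _ _))).
    replace (f q * g q - f p * g p) with (f q * (g q - g p) + g p * (f q - f p)) by ring.
    eapply Rle_lt_trans; [apply Rabs_triang|]. rewrite !Rabs_mult.
    assert (A1 : Rabs (f q) <= M1) by auto. assert (A2 : Rabs (g p) <= M2) by auto.
    pose proof (Rabs_pos (g q - g p)). pose proof (Rabs_pos (f q - f p)).
    pose proof (Rmult_le_compat _ _ _ _ (Rabs_pos (f q)) (Rabs_pos _) A1 (Rlt_le _ _ E2)).
    pose proof (Rmult_le_compat _ _ _ _ (Rabs_pos (g p)) (Rabs_pos _) A2 (Rlt_le _ _ E1)).
    nra.
Qed.

Definition step (t : R) : R -> R := fun p => if Rlt_dec t p then 1 else 0.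

Lemma Qb_step t : in_Qb (step t).
Proof.
  unfold step. split; [|split].
  - exists 1. intros p _. destruct (Rlt_dec t p); rewrite ?Rabs_R1, ?Rabs_R0; lra.
  - intros p q _ _ Hpq. destruct (Rlt_dec t p); destruct (Rlt_dec t q); lra.
  - intros p Hp eps He. destruct (Rlt_dec t p) as [Htp|Htp].
    + exists (p - t). split; [lra|]. intros q Hq Hqp Hd.
      destruct (Rlt_dec t q); [|lra]. replace (1 - 1) with 0 by ring. rewrite Rabs_R0; lra.
    + exists 1. split; [lra|]. intros q Hq Hqp Hd.
      destruct (Rlt_dec t q); [lra|]. replace (0 - 0) with 0 by ring. rewrite Rabs_R0; lra.
Qed.
(* A linear combination of two differences g1 - h1
   and g2 - h2 is again a difference, with the explicit witnesses [comb a b g1 h1 g2 h2]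
   and [comb a b h1 g1 h2 g2], which split each coefficient into its positive and
   negative parts so that only nonnegative combinations of Q_b are formed. *)

Definition pos_part (a : R) : R := Rmax a 0.
Definition neg_part (a : R) : R := Rmax (- a) 0.

Lemma pos_part_nonneg a : 0 <= pos_part a.
Proof. apply Rmax_r. Qed.

Lemma neg_part_nonneg a : 0 <= neg_part a.
Proof. apply Rmax_r. Qed.

Lemma pos_sub_neg a : pos_part a - neg_part a = a.
Proof. unfold pos_part, neg_part, Rmax. destruct Rle_dec; destruct Rle_dec; lra. Qed.

Definition comb (a b : R) (g1 h1 g2 h2 : R -> R) : R -> R :=
  fun p => pos_part a * g1 p + neg_part a * h1 p + (pos_part b * g2 p + neg_part b * h2 p).

Lemma Qb_comb a b g1 h1 g2 h2 : in_Qb g1 -> in_Qb h1 -> in_Qb g2 -> in_Qb h2 ->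
  in_Qb (comb a b g1 h1 g2 h2).
Proof.
  intros. apply Qb_add; apply Qb_lin; auto using pos_part_nonneg, neg_part_nonneg.
Qed.

Lemma comb_sub a b g1 h1 g2 h2 p :
  comb a b g1 h1 g2 h2 p - comb a b h1 g1 h2 g2 p = a * (g1 p - h1 p) + b * (g2 p - h2 p).
Proof.
  transitivity ((pos_part a - neg_part a) * (g1 p - h1 p)
                + (pos_part b - neg_part b) * (g2 p - h2 p)).
  - unfold comb; ring.
  - rewrite !pos_sub_neg; reflexivity.
Qed.

Definition Qb_diff (f : R -> R) : Prop :=
  exists g h, in_Qb g /\ in_Qb h /\ forall p, unit_int p -> f p = g p - h p.

Lemma Qb_diff_ext f f' : Qb_diff f -> (forall p, unit_int p -> f p = f' p) -> Qb_diff f'.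
Proof.
  intros [g [h [Hg [Hh E]]]] H. exists g, h. split; [|split]; auto.
  intros p Hp. rewrite <- H; auto.
Qed.

Lemma Qb_diff_const c : Qb_diff (cst c).
Proof.
  exists (cst c), (cst 0). split; [|split]; auto using Qb_const.
  intros; unfold cst; ring.
Qed.

Lemma Qb_diff_lin f1 f2 a b : Qb_diff f1 -> Qb_diff f2 -> Qb_diff (fun p => a * f1 p + b * f2 p).
Proof.
  intros [g1 [h1 [Q1 [R1 E1]]]] [g2 [h2 [Q2 [R2 E2]]]].
  exists (comb a b g1 h1 g2 h2), (comb a b h1 g1 h2 g2).
  split; [|split]; auto using Qb_comb.
  intros p Hp. rewrite comb_sub, E1, E2; auto.
Qed.

(* Shifting both terms by a common constant makes them nonnegative on (0,1]. *)
Lemma Qb_diff_nonneg f : Qb_diff f -> exists g h, in_Qb g /\ in_Qb h /\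
  (forall p, unit_int p -> 0 <= g p) /\ (forall p, unit_int p -> 0 <= h p) /\
  forall p, unit_int p -> f p = g p - h p.
Proof.
  intros [g [h [Hg [Hh E]]]].
  pose proof Hg as [[M1 HM1] _]. pose proof Hh as [[M2 HM2] _].
  pose proof (bound_nonneg _ _ HM1). pose proof (bound_nonneg _ _ HM2).
  exists (fun p => g p + cst (M1 + M2) p), (fun p => h p + cst (M1 + M2) p).
  split; [|split; [|split; [|split]]]; auto using Qb_add, Qb_const; unfold cst.
  - intros p Hp. specialize (HM1 p Hp). apply Rabs_le_inv in HM1. lra.
  - intros p Hp. specialize (HM2 p Hp). apply Rabs_le_inv in HM2. lra.
  - intros p Hp. rewrite E; auto. ring.
Qed.

(* (g1 - h1)(g2 - h2) = (g1 g2 + h1 h2) - (g1 h2 + h1 g2), all products nonnegative. *)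
Lemma Qb_diff_mul f1 f2 : Qb_diff f1 -> Qb_diff f2 -> Qb_diff (fun p => f1 p * f2 p).
Proof.
  intros H1 H2.
  destruct (Qb_diff_nonneg f1 H1) as [g1 [h1 [Q1 [R1 [P1 [P1' E1]]]]]].
  destruct (Qb_diff_nonneg f2 H2) as [g2 [h2 [Q2 [R2 [P2 [P2' E2]]]]]].
  exists (fun p => g1 p * g2 p + h1 p * h2 p), (fun p => g1 p * h2 p + h1 p * g2 p).
  split; [|split].
  - apply (Qb_add (fun p => g1 p * g2 p) (fun p => h1 p * h2 p)); apply Qb_mul; auto.
  - apply (Qb_add (fun p => g1 p * h2 p) (fun p => h1 p * g2 p)); apply Qb_mul; auto.
  - intros p Hp. rewrite E1, E2; auto. ring.
Qed.

(* Indicators of sets of Sigma are differences of elements of Q_b: intervals are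
   differences of step functions, and the Boolean operations are polynomial
   expressions in indicators. *)
Definition indicator (A : R -> Prop) : R -> R :=
  fun p => if excluded_middle_informative (A p) then 1 else 0.

Lemma Qb_diff_indicator A : in_Sigma A -> Qb_diff (indicator A).
Proof.
  induction 1 as [a b Ha Hab Hb | A B _ IA _ IB | A B _ IA _ IB | A _ IA].
  - exists (step a), (step b). split; [|split]; auto using Qb_step.
    intros p Hp. unfold indicator, step.
    destruct (excluded_middle_informative (a < p <= b));
      destruct (Rlt_dec a p); destruct (Rlt_dec b p); lra.
  - (* 1_(A u B) = 1_A + 1_B - 1_A 1_B *)
    apply (Qb_diff_ext (fun p => 1 * (1 * indicator A p + 1 * indicator B p)
                                 + (-1) * (indicator A p * indicator B p))).
    + apply (Qb_diff_lin (fun p => 1 * indicator A p + 1 * indicator B p)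
                         (fun p => indicator A p * indicator B p));
        [apply Qb_diff_lin | apply Qb_diff_mul]; auto.
    + intros p Hp. unfold indicator.
      destruct (excluded_middle_informative (A p)); destruct (excluded_middle_informative (B p));
        destruct (excluded_middle_informative (A p \/ B p)); try tauto; ring.
  -
    apply (Qb_diff_ext (fun p => indicator A p * indicator B p)); [apply Qb_diff_mul; auto|].
    intros p Hp. unfold indicator.
    destruct (excluded_middle_informative (A p)); destruct (excluded_middle_informative (B p));
      destruct (excluded_middle_informative (A p /\ B p)); try tauto; ring.
  - (* on (0,1], 1_(complement of A) = 1 - 1_A *)
    apply (Qb_diff_ext (fun p => 1 * cst 1 p + (-1) * indicator A p));
      [apply Qb_diff_lin; auto using Qb_diff_const|].
    intros p Hp. unfold indicator, cst.
    destruct (excluded_middle_informative (A p));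
      destruct (excluded_middle_informative (unit_int p /\ ~ A p)); try tauto; ring.
Qed.

Fixpoint piece_sum (l : list (R * (R -> Prop))) (p : R) : R :=
  match l with
  | nil => 0
  | c :: l' => fst c * indicator (snd c) p + piece_sum l' p
  end.

(* Pairwise disjointness of the pieces, in a form suited to induction on l. *)
Fixpoint pieces_disjoint (l : list (R * (R -> Prop))) : Prop :=
  match l with
  | nil => True
  | c :: l' => (forall d, In d l' -> forall p, ~ (snd c p /\ snd d p)) /\ pieces_disjoint l'
  end.

Lemma pieces_disjoint_nth l :
  (forall i j, (i < length l)%nat -> (j < length l)%nat -> i <> j ->
     forall p, ~ (snd (nth i l dflt_piece) p /\ snd (nth j l dflt_piece) p)) ->
  pieces_disjoint l.
Proof.
  induction l as [|c l IH]; simpl; auto. intros H. split.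
  - intros d Hd p. destruct (In_nth l d dflt_piece Hd) as [n [Hn En]].
    pose proof (H 0%nat (S n) ltac:(lia) ltac:(lia) ltac:(lia) p) as K.
    simpl in K. rewrite En in K. exact K.
  - apply IH. intros i j Hi Hj Hij p. apply (H (S i) (S j)); simpl; lia.
Qed.

Lemma piece_sum_outside l p : (forall c, In c l -> ~ snd c p) -> piece_sum l p = 0.
Proof.
  induction l as [|c l IH]; simpl; auto. intros H.
  rewrite IH; auto. unfold indicator.
  destruct (excluded_middle_informative (snd c p)) as [h|h]; [exfalso; apply (H c); auto|ring].
Qed.

Lemma piece_sum_inside l : pieces_disjoint l ->
  forall c p, In c l -> snd c p -> piece_sum l p = fst c.
Proof.
  induction l as [|d l IH]; simpl; [tauto|]. intros [HD HL] c p [E|Hc] Hp.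
  - subst d. rewrite piece_sum_outside.
    + unfold indicator. destruct (excluded_middle_informative (snd c p)); [ring|tauto].
    + intros e He He'. apply (HD e He p). tauto.
  - rewrite (IH HL c p Hc Hp). unfold indicator.
    destruct (excluded_middle_informative (snd d p)) as [h|h]; [|ring].
    exfalso. apply (HD c Hc p). tauto.
Qed.

Lemma Qb_diff_piece_sum l : Forall (fun c => in_Sigma (snd c)) l -> Qb_diff (piece_sum l).
Proof.
  induction l as [|c l IH]; intros HF.
  - apply (Qb_diff_ext (cst 0)); auto using Qb_diff_const.
  - inversion HF; subst.
    apply (Qb_diff_ext (fun p => fst c * indicator (snd c) p + 1 * piece_sum l p)).
    + apply Qb_diff_lin; auto using Qb_diff_indicator.
    + intros; simpl; ring.
Qed.

Lemma Qb_diff_simple s : simple_fn s -> Qb_diff s.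
Proof.
  intros [l [HF [HD Hs]]]. apply (Qb_diff_ext (piece_sum l)); auto using Qb_diff_piece_sum.
  intros p Hp. destruct (Hs p Hp) as [H0 H1].
  destruct (classic (exists c, In c l /\ snd c p)) as [[c [Hc Hcp]]|Hn].
  - rewrite (H1 c Hc Hcp). apply piece_sum_inside; auto using pieces_disjoint_nth.
  - assert (Hout : forall c, In c l -> ~ snd c p) by (intros c Hc Hcp; apply Hn; eauto).
    rewrite H0, piece_sum_outside; auto.
Qed.

Definition approx_by_Qb_diff (f : R -> R) : Prop :=
  forall eps, 0 < eps -> exists g h, in_Qb g /\ in_Qb h /\
    forall p, unit_int p -> Rabs (f p - (g p - h p)) <= eps.

Lemma B_approx_by_Qb_diff f : in_B f -> approx_by_Qb_diff f.
Proof.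
  intros [_ H] eps He. destruct (H eps He) as [s [Hs Hfs]].
  destruct (Qb_diff_simple s Hs) as [g [h [Hg [Hh E]]]].
  exists g, h. split; [|split]; auto. intros p Hp. rewrite <- E; auto.
Qed.

Lemma Rabs_lin_le a b x y e : Rabs x <= e -> Rabs y <= e ->
  Rabs (a * x + b * y) <= (Rabs a + Rabs b) * e.
Proof.
  intros Hx Hy. eapply Rle_trans; [apply Rabs_triang|]. rewrite !Rabs_mult.
  pose proof (Rmult_le_compat_l _ _ _ (Rabs_pos a) Hx).
  pose proof (Rmult_le_compat_l _ _ _ (Rabs_pos b) Hy). lra.
Qed.

Lemma comb_approx a b f1 f2 g1 h1 g2 h2 e p :
  Rabs (f1 p - (g1 p - h1 p)) <= e -> Rabs (f2 p - (g2 p - h2 p)) <= e ->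
  Rabs (a * f1 p + b * f2 p - (comb a b g1 h1 g2 h2 p - comb a b h1 g1 h2 g2 p))
    <= (Rabs a + Rabs b) * e.
Proof.
  intros H1 H2. rewrite comb_sub.
  replace (a * f1 p + b * f2 p - (a * (g1 p - h1 p) + b * (g2 p - h2 p)))
    with (a * (f1 p - (g1 p - h1 p)) + b * (f2 p - (g2 p - h2 p))) by ring.
  apply Rabs_lin_le; auto.
Qed.

Lemma approx_by_Qb_diff_lin f1 f2 a b : approx_by_Qb_diff f1 -> approx_by_Qb_diff f2 ->
  approx_by_Qb_diff (fun p => a * f1 p + b * f2 p).
Proof.
  intros H1 H2 eps He.
  set (e := eps / (Rabs a + Rabs b + 1)).
  pose proof (Rabs_pos a). pose proof (Rabs_pos b).
  assert (Ee : (Rabs a + Rabs b + 1) * e = eps) by (unfold e; field; lra).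
  assert (Hp : 0 < e) by (unfold e; apply Rdiv_lt_0_compat; lra).
  destruct (H1 e Hp) as [g1 [h1 [Q1 [R1 A1]]]].
  destruct (H2 e Hp) as [g2 [h2 [Q2 [R2 A2]]]].
  exists (comb a b g1 h1 g2 h2), (comb a b h1 g1 h2 g2). split; [|split]; auto using Qb_comb.
  intros p Hp'. eapply Rle_trans; [apply comb_approx; auto|]. nra.
Qed.
Section Preference.

Variable pref : (R -> R) -> (R -> R) -> Prop.
Hypothesis pref_preorder : total_preorder_Qb pref.
Hypothesis pref_continuous : continuous_pref pref.
Hypothesis pref_monotonic : monotonic_pref pref.
Hypothesis pref_dual_indep : dual_independence pref.

Lemma pref_refl f : in_Qb f -> pref f f.
Proof. apply (proj1 pref_preorder). Qed.

Lemma pref_trans f g h : in_Qb f -> in_Qb g -> in_Qb h -> pref f g -> pref g h -> pref f h.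
Proof. apply (proj1 (proj2 pref_preorder)). Qed.

Lemma pref_total f g : in_Qb f -> in_Qb g -> pref f g \/ pref g f.
Proof. apply (proj2 (proj2 pref_preorder)). Qed.

Lemma strict_pref_trans_l f g h : in_Qb f -> in_Qb g -> in_Qb h ->
  strict pref f g -> pref g h -> strict pref f h.
Proof.
  intros Hf Hg Hh [H1 H2] H3. split; [apply (pref_trans f g h); auto|].
  intros H4. apply H2. apply (pref_trans g h f); auto.
Qed.

Lemma strict_pref_trans_r f g h : in_Qb f -> in_Qb g -> in_Qb h ->
  pref f g -> strict pref g h -> strict pref f h.
Proof.
  intros Hf Hg Hh H1 [H2 H3]. split; [apply (pref_trans f g h); auto|].
  intros H4. apply H3. apply (pref_trans h f g); auto.
Qed.

Lemma pref_of_le f g : in_Qb f -> in_Qb g -> (forall p, unit_int p -> g p <= f p) -> pref f g.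
Proof. intros Hf Hg H. apply pref_monotonic; auto. intros; apply Rle_ge; auto. Qed.

Lemma pref_between_consts f : in_Qb f ->
  exists M, pref (cst M) f /\ pref f (cst (- M)).
Proof.
  intros Hf. pose proof Hf as [[M HM] _]. exists M.
  split; apply pref_of_le; auto using Qb_const; intros p Hp; unfold cst;
    pose proof (Rabs_le_inv _ _ (HM p Hp)); lra.
Qed.

(* Dual independence spreads a single strict comparison of constants to all pairs:
   mixing c, d and a constant h with weight a = (x - y)/(c - d) gives the constants
   x > y whenever x - y < c - d, and monotonicity handles larger gaps. *)
Lemma const_strict_spread c d : strict pref (cst c) (cst d) ->
  forall x y, y < x -> strict pref (cst x) (cst y).
Proof.
  intros Hcd.
  assert (Hdc : d < c).
  { destruct (Rlt_dec d c) as [|Hn]; auto. exfalso. apply (proj2 Hcd).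
    apply pref_of_le; auto using Qb_const. intros; unfold cst; lra. }
  assert (Hsmall : forall x y, y < x -> x - y < c - d -> strict pref (cst x) (cst y)).
  { intros x y Hxy Hs.
    set (a := (x - y) / (c - d)).
    assert (Ea : a * (c - d) = x - y) by (unfold a; field; lra).
    assert (Ha : 0 < a < 1) by (split; nra).
    set (h := (x - a * c) / (1 - a)).
    assert (Eh : (1 - a) * h = x - a * c) by (unfold h; field; lra).
    pose proof (pref_dual_indep (cst c) (cst d) (cst h) a
                  (Qb_const _) (Qb_const _) (Qb_const _) Ha Hcd) as H.
    replace (fun p => a * cst c p + (1 - a) * cst h p) with (cst x) in H
      by (apply functional_extensionality; intros; unfold cst; rewrite Eh; ring).
    replace (fun p => a * cst d p + (1 - a) * cst h p) with (cst y) in H; [exact H|].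
    apply functional_extensionality; intros; unfold cst. rewrite Eh.
    replace (a * d + (x - a * c)) with (x - a * (c - d)) by ring. rewrite Ea; ring. }
  intros x y Hxy. destruct (Rlt_dec (x - y) (c - d)) as [Hs|Hs]; auto.
  apply (strict_pref_trans_l _ (cst (x - (c - d) / 2))); auto using Qb_const.
  - apply Hsmall; lra.
  - apply pref_of_le; auto using Qb_const. intros; unfold cst; lra.
Qed.

(* Degenerate case: if no constant is strictly preferred to another, nothing is
   strictly preferred at all (sandwich between constants), so 0 represents. *)
Lemma zero_represents : ~ (exists c d, strict pref (cst c) (cst d)) ->
  represents_on_Qb (fun _ => 0) pref.
Proof.
  intros Hnone f g Hf Hg. split; [|lra]. intros Hfg. exfalso. apply Hnone.
  destruct (pref_between_consts f Hf) as [M1 [HM1 _]].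
  destruct (pref_between_consts g Hg) as [M2 [_ HM2]].
  exists M1, (- M2).
  apply (strict_pref_trans_r _ f); auto using Qb_const.
  apply (strict_pref_trans_l _ g); auto using Qb_const.
Qed.

Lemma pref_at_limit phi (G : R -> R -> R) : in_Qb phi -> (forall e, in_Qb (G e)) ->
  (forall e p, unit_int p -> Rabs (G e p - G 0 p) <= Rabs e) ->
  ((forall e, 0 < e -> pref (G e) phi) -> pref (G 0) phi) /\
  ((forall e, 0 < e -> pref phi (G e)) -> pref phi (G 0)).
Proof.
  intros Hphi HG Hlip.
  assert (Hconv : unif_conv (fun n => G (/ (INR n + 1))) (G 0)).
  { apply unif_conv_of_bound. intros n p Hp.
    rewrite <- (Rabs_pos_eq (/ (INR n + 1))) at 2; auto using Rlt_le, inv_succ_pos. }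
  destruct (pref_continuous phi Hphi _ _ (fun n => HG _) (HG 0) Hconv) as [Hup Hlow].
  split; intros H; [apply Hup | apply Hlow]; intros n; apply H, inv_succ_pos.
Qed.

Section CertaintyEquivalent.

Hypothesis const_increasing : forall x y, y < x -> strict pref (cst x) (cst y).

Lemma mix_cst_lipschitz a y z g p : 0 <= a <= 1 ->
  Rabs (mix a (cst y) g p - mix a (cst z) g p) <= Rabs (y - z).
Proof.
  intros Ha. unfold mix, cst.
  replace (a * y + (1 - a) * g p - (a * z + (1 - a) * g p)) with (a * (y - z)) by ring.
  rewrite Rabs_mult, (Rabs_pos_eq a); [|lra]. pose proof (Rabs_pos (y - z)). nra.
Qed.

(* Dual independence applies to the strict
   comparisons f > x - e and x + e > f, and continuity lets e go to 0. *)
Lemma mix_indifferent a f g x : 0 < a < 1 -> in_Qb f -> in_Qb g ->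
  pref f (cst x) -> pref (cst x) f ->
  pref (mix a f g) (mix a (cst x) g) /\ pref (mix a (cst x) g) (mix a f g).
Proof.
  intros Ha Hf Hg Hfx Hxf.
  assert (Qm : forall h, in_Qb h -> in_Qb (mix a h g)) by (intros; apply Qb_mix; auto; lra).
  assert (E0 : forall s, mix a (cst x) g = (fun e => mix a (cst (x + s * e)) g) 0)
    by (intros s; rewrite Rmult_0_r, Rplus_0_r; reflexivity).
  assert (Hlip : forall s e p, Rabs s = 1 -> unit_int p ->
    Rabs (mix a (cst (x + s * e)) g p - mix a (cst (x + s * 0)) g p) <= Rabs e).
  { intros s e p Hs Hp. eapply Rle_trans; [apply mix_cst_lipschitz; lra|].
    replace (x + s * e - (x + s * 0)) with (s * e) by ring.
    rewrite Rabs_mult, Hs; lra. }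
  split.
  - rewrite (E0 (-1)).
    refine (proj2 (pref_at_limit (mix a f g) (fun e => mix a (cst (x + -1 * e)) g) _ _
                     (fun e p => Hlip (-1) e p ltac:(unfold Rabs; destruct Rcase_abs; lra))) _);
      auto using Qb_const.
    intros e He. apply pref_dual_indep; auto using Qb_const.
    apply (strict_pref_trans_r _ (cst x)); auto using Qb_const.
    apply const_increasing; lra.
  - rewrite (E0 1).
    refine (proj1 (pref_at_limit (mix a f g) (fun e => mix a (cst (x + 1 * e)) g) _ _
                     (fun e p => Hlip 1 e p Rabs_R1)) _);
      auto using Qb_const.
    intros e He. apply pref_dual_indep; auto using Qb_const.
    apply (strict_pref_trans_l _ (cst x)); auto using Qb_const.
    apply const_increasing; lra.
Qed.

(* Existence of a certainty equivalent: the supremum x of the constants c with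
   f >= c is indifferent to f, by continuity along x - e and x + e. *)
Lemma certainty_equivalent_exists f : in_Qb f -> exists x, pref f (cst x) /\ pref (cst x) f.
Proof.
  intros Hf.
  set (S := fun c => pref f (cst c)).
  assert (Hub : forall y, pref (cst y) f -> forall c, S c -> c <= y).
  { intros y Hy c Hc. destruct (Rle_dec c y) as [|Hn]; auto. exfalso.
    assert (Hs : strict pref (cst c) f).
    { apply (strict_pref_trans_l _ (cst y)); auto using Qb_const. apply const_increasing; lra. }
    exact (proj2 Hs Hc). }
  destruct (pref_between_consts f Hf) as [M [HMf HfM]].
  destruct (completeness S) as [x [Hx1 Hx2]].
  { exists M. intros c Hc. apply (Hub M HMf c Hc). }
  { exists (- M). exact HfM. }
  assert (E0 : forall s, cst x = (fun e => cst (x + s * e)) 0)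
    by (intros s; rewrite Rmult_0_r, Rplus_0_r; reflexivity).
  assert (Hlip : forall s e p, Rabs s = 1 -> unit_int p ->
    Rabs (cst (x + s * e) p - cst (x + s * 0) p) <= Rabs e).
  { intros s e p Hs _. unfold cst. replace (x + s * e - (x + s * 0)) with (s * e) by ring.
    rewrite Rabs_mult, Hs; lra. }
  exists x. split.
  - rewrite (E0 (-1)).
    refine (proj2 (pref_at_limit f (fun e => cst (x + -1 * e)) _ _
                     (fun e p => Hlip (-1) e p ltac:(unfold Rabs; destruct Rcase_abs; lra))) _);
      auto using Qb_const.
    intros e He. destruct (pref_total f (cst (x + -1 * e))) as [H|H]; auto using Qb_const.
    assert (x <= x + -1 * e) by (apply Hx2; intros c Hc; apply Hub; auto). lra.
  - rewrite (E0 1).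
    refine (proj1 (pref_at_limit f (fun e => cst (x + 1 * e)) _ _
                     (fun e p => Hlip 1 e p Rabs_R1)) _);
      auto using Qb_const.
    intros e He. destruct (pref_total f (cst (x + 1 * e))) as [H|H]; auto using Qb_const.
    pose proof (Hx1 _ H). lra.
Qed.

Definition CE (f : R -> R) : R :=
  epsilon (inhabits 0) (fun x => pref f (cst x) /\ pref (cst x) f).

Lemma CE_spec f : in_Qb f -> pref f (cst (CE f)) /\ pref (cst (CE f)) f.
Proof. intros Hf. unfold CE. apply epsilon_spec, certainty_equivalent_exists, Hf. Qed.

Lemma CE_unique f x : in_Qb f -> pref f (cst x) -> pref (cst x) f -> CE f = x.
Proof.
  intros Hf H1 H2. destruct (CE_spec f Hf) as [A B].
  destruct (Rtotal_order x (CE f)) as [Hl|[He|Hg]]; auto; exfalso.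
  - apply (proj2 (const_increasing _ _ Hl)). apply (pref_trans _ f); auto using Qb_const.
  - apply (proj2 (const_increasing _ _ Hg)). apply (pref_trans _ f); auto using Qb_const.
Qed.

Lemma CE_const c : CE (cst c) = c.
Proof. apply CE_unique; auto using Qb_const, pref_refl. Qed.

Lemma CE_represents f g : in_Qb f -> in_Qb g -> (strict pref f g <-> CE f > CE g).
Proof.
  intros Hf Hg. destruct (CE_spec f Hf) as [A B]. destruct (CE_spec g Hg) as [C D].
  split.
  - intros [H1 H2]. destruct (Rtotal_order (CE f) (CE g)) as [Hl|[He|Hgt]]; auto; exfalso.
    + apply (proj2 (const_increasing _ _ Hl)).
      apply (pref_trans _ f); auto using Qb_const. apply (pref_trans _ g); auto using Qb_const.
    + apply H2. rewrite He in B. apply (pref_trans _ (cst (CE g))); auto using Qb_const.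
  - intros H. apply (strict_pref_trans_r _ (cst (CE f))); auto using Qb_const.
    apply (strict_pref_trans_l _ (cst (CE g))); auto using Qb_const.
Qed.

Lemma CE_mono f g : in_Qb f -> in_Qb g -> (forall p, unit_int p -> g p <= f p) -> CE g <= CE f.
Proof.
  intros Hf Hg H. destruct (Rle_dec (CE g) (CE f)) as [|Hn]; auto. exfalso.
  apply (proj2 (proj2 (CE_represents g f Hg Hf) ltac:(lra))). apply pref_of_le; auto.
Qed.

Lemma CE_ext f g : in_Qb f -> in_Qb g -> (forall p, unit_int p -> f p = g p) -> CE f = CE g.
Proof.
  intros Hf Hg H. apply Rle_antisym; apply CE_mono; auto; intros p Hp; rewrite H; auto; lra.
Qed.

(* CE is affine along mixtures: substitute f ~ CE f, then g ~ CE g. *)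
Lemma CE_mix a f g : 0 < a < 1 -> in_Qb f -> in_Qb g ->
  CE (mix a f g) = a * CE f + (1 - a) * CE g.
Proof.
  intros Ha Hf Hg.
  destruct (CE_spec f Hf) as [A B]. destruct (CE_spec g Hg) as [C D].
  destruct (mix_indifferent a f g (CE f) Ha Hf Hg A B) as [I1 I2].
  assert (E1 : mix a (cst (CE f)) g = mix (1 - a) g (cst (CE f)))
    by (apply functional_extensionality; intros; unfold mix, cst; ring).
  destruct (mix_indifferent (1 - a) g (cst (CE f)) (CE g) ltac:(lra) Hg (Qb_const _) C D)
    as [I3 I4].
  assert (E2 : mix (1 - a) (cst (CE g)) (cst (CE f)) = cst (a * CE f + (1 - a) * CE g))
    by (apply functional_extensionality; intros; unfold mix, cst; ring).
  rewrite E1 in I1, I2. rewrite E2 in I3, I4.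
  assert (Q1 : in_Qb (mix a f g)) by (apply Qb_mix; auto; lra).
  assert (Q2 : in_Qb (mix (1 - a) g (cst (CE f)))) by (apply Qb_mix; auto using Qb_const; lra).
  apply CE_unique; auto.
  - apply (pref_trans _ (mix (1 - a) g (cst (CE f)))); auto using Qb_const.
  - apply (pref_trans _ (mix (1 - a) g (cst (CE f)))); auto using Qb_const.
Qed.

Lemma CE_scale_lt1 s f : 0 < s < 1 -> in_Qb f -> CE (fun p => s * f p) = s * CE f.
Proof.
  intros Hs Hf. rewrite (CE_ext _ (mix s f (cst 0))); auto using Qb_scale with real.
  - rewrite CE_mix, CE_const; auto using Qb_const; ring.
  - apply Qb_scale; auto; lra.
  - apply Qb_mix; auto using Qb_const; lra.
  - intros; unfold mix, cst; ring.
Qed.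

(* Positive homogeneity: for t > 0, both (1/(1+t)) (t f) and (t/(1+t)) f are
   mixtures with weights in (0,1) and they coincide. *)
Lemma CE_scale t f : 0 <= t -> in_Qb f -> CE (fun p => t * f p) = t * CE f.
Proof.
  intros Ht Hf. destruct Ht as [Ht|Ht].
  - assert (Qt : in_Qb (fun p => t * f p)) by (apply Qb_scale; auto; lra).
    assert (Hw1 : 0 < / (1 + t) < 1).
    { split; [apply Rinv_0_lt_compat; lra|].
      rewrite <- Rinv_1. apply Rinv_lt_contravar; lra. }
    assert (Hw2 : 0 < t / (1 + t) < 1).
    { replace (t / (1 + t)) with (1 - / (1 + t)) by (field; lra). lra. }
    assert (E : CE (fun p => / (1 + t) * (t * f p)) = CE (fun p => t / (1 + t) * f p)).
    { apply CE_ext; try (apply Qb_scale; auto; lra). intros; field; lra. }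
    rewrite (CE_scale_lt1 (/ (1 + t)) (fun p => t * f p)), (CE_scale_lt1 (t / (1 + t)) f) in E; auto.
    apply (Rmult_eq_reg_l (/ (1 + t))); [rewrite E; field; lra|].
    apply Rgt_not_eq, Hw1.
  - subst t. rewrite Rmult_0_l. transitivity (CE (cst 0)); [|apply CE_const].
    apply CE_ext; auto using Qb_const; [apply Qb_scale; auto; lra|].
    intros; unfold cst; ring.
Qed.

Lemma CE_add f g : in_Qb f -> in_Qb g -> CE (fun p => f p + g p) = CE f + CE g.
Proof.
  intros Hf Hg.
  replace (fun p => f p + g p) with (fun p => 2 * mix (1 / 2) f g p)
    by (apply functional_extensionality; intros; unfold mix; field).
  rewrite CE_scale, CE_mix; auto; try lra. apply Qb_mix; auto; lra.
Qed.

Lemma CE_cone s t f g : 0 <= s -> 0 <= t -> in_Qb f -> in_Qb g ->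
  CE (fun p => s * f p + t * g p) = s * CE f + t * CE g.
Proof.
  intros Hs Ht Hf Hg.
  transitivity (CE (fun p => s * f p) + CE (fun p => t * g p)).
  - apply (CE_add (fun p => s * f p) (fun p => t * g p)); apply Qb_scale; auto.
  - rewrite !CE_scale; auto.
Qed.

Lemma CE_comb_sub a b g1 h1 g2 h2 : in_Qb g1 -> in_Qb h1 -> in_Qb g2 -> in_Qb h2 ->
  CE (comb a b g1 h1 g2 h2) - CE (comb a b h1 g1 h2 g2)
  = a * (CE g1 - CE h1) + b * (CE g2 - CE h2).
Proof.
  intros Q1 R1 Q2 R2.
  assert (Hcomb : forall u1 v1 u2 v2, in_Qb u1 -> in_Qb v1 -> in_Qb u2 -> in_Qb v2 ->
    CE (comb a b u1 v1 u2 v2)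
    = pos_part a * CE u1 + neg_part a * CE v1 + (pos_part b * CE u2 + neg_part b * CE v2)).
  { intros. unfold comb.
    rewrite (CE_add (fun p => pos_part a * u1 p + neg_part a * v1 p)
                    (fun p => pos_part b * u2 p + neg_part b * v2 p));
      try (apply Qb_lin; auto using pos_part_nonneg, neg_part_nonneg).
    rewrite !CE_cone; auto using pos_part_nonneg, neg_part_nonneg. }
  rewrite !Hcomb; auto.
  transitivity ((pos_part a - neg_part a) * (CE g1 - CE h1)
                + (pos_part b - neg_part b) * (CE g2 - CE h2)); [ring|].
  rewrite !pos_sub_neg; reflexivity.
Qed.

(* Key estimate: CE g - CE h is 1-Lipschitz in g - h for the sup norm on (0,1].
   If |(g - h) - (g' - h')| <= d then g + h' <= g' + h + d and conversely,
   and CE is monotone and additive. *)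
Lemma CE_diff_lipschitz g h g' h' d : in_Qb g -> in_Qb h -> in_Qb g' -> in_Qb h' ->
  (forall p, unit_int p -> Rabs ((g p - h p) - (g' p - h' p)) <= d) ->
  Rabs ((CE g - CE h) - (CE g' - CE h')) <= d.
Proof.
  intros Hg Hh Hg' Hh' H.
  assert (Hsum : forall u v w, in_Qb u -> in_Qb v ->
    CE (fun p => (u p + v p) + cst w p) = CE u + CE v + w).
  { intros u v w Hu Hv. rewrite (CE_add (fun p => u p + v p)), CE_add, CE_const;
      auto using Qb_add, Qb_const. }
  assert (L1 : CE (fun p => g p + h' p) <= CE (fun p => (g' p + h p) + cst d p)).
  { apply CE_mono; auto using Qb_add, Qb_const.
    intros p Hp. pose proof (Rabs_le_inv _ _ (H p Hp)). unfold cst. lra. }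
  assert (L2 : CE (fun p => g' p + h p) <= CE (fun p => (g p + h' p) + cst d p)).
  { apply CE_mono; auto using Qb_add, Qb_const.
    intros p Hp. pose proof (Rabs_le_inv _ _ (H p Hp)). unfold cst. lra. }
  rewrite Hsum, CE_add in L1, L2; auto. apply Rabs_le. lra.
Qed.

Definition limit_value (f : R -> R) (l : R) : Prop :=
  forall eps g h, 0 < eps -> in_Qb g -> in_Qb h ->
    (forall p, unit_int p -> Rabs (f p - (g p - h p)) <= eps) ->
    Rabs (l - (CE g - CE h)) <= eps.

Definition Lext (f : R -> R) : R := epsilon (inhabits 0) (limit_value f).

Lemma Rabs_sub_tri x y z e1 e2 : Rabs (x - y) <= e1 -> Rabs (x - z) <= e2 ->
  Rabs (y - z) <= e1 + e2.
Proof.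
  intros H1 H2. apply Rabs_le_inv in H1. apply Rabs_le_inv in H2. apply Rabs_le. lra.
Qed.

(* The limit value is the supremum of the lower estimates CE g - CE h - eps; by the
   Lipschitz estimate every upper estimate CE g - CE h + eps bounds them. *)
Lemma limit_value_exists f : approx_by_Qb_diff f -> exists l, limit_value f l.
Proof.
  intros Ha.
  destruct (Ha 1 ltac:(lra)) as [g0 [h0 [Q0 [R0 H0]]]].
  set (A := fun r => exists eps g h, 0 < eps /\ in_Qb g /\ in_Qb h /\
     (forall p, unit_int p -> Rabs (f p - (g p - h p)) <= eps) /\ r = CE g - CE h - eps).
  assert (UB : forall eps g h, 0 < eps -> in_Qb g -> in_Qb h ->
     (forall p, unit_int p -> Rabs (f p - (g p - h p)) <= eps) ->
     forall r, A r -> r <= CE g - CE h + eps).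
  { intros eps g h He Hg Hh Hgh r [e' [g' [h' [He' [Hg' [Hh' [Hgh' Er]]]]]]].
    assert (L := CE_diff_lipschitz g' h' g h (e' + eps) Hg' Hh' Hg Hh
                   (fun p Hp => Rabs_sub_tri (f p) _ _ _ _ (Hgh' p Hp) (Hgh p Hp))).
    apply Rabs_le_inv in L. lra. }
  destruct (completeness A) as [l [Hl1 Hl2]].
  { exists (CE g0 - CE h0 + 1). intros r Hr. apply (UB 1 g0 h0); auto; lra. }
  { exists (CE g0 - CE h0 - 1), 1, g0, h0. split; [lra | auto]. }
  exists l. intros eps g h He Hg Hh Hgh. apply Rabs_le. split.
  - assert (CE g - CE h - eps <= l) by (apply Hl1; exists eps, g, h; auto).
    lra.
  - assert (l <= CE g - CE h + eps) by (apply Hl2; intros r Hr; apply (UB eps g h); auto).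
    lra.
Qed.

Lemma limit_value_unique f l l' : approx_by_Qb_diff f ->
  limit_value f l -> limit_value f l' -> l = l'.
Proof.
  intros Ha P P'. destruct (Req_dec l l') as [|Hn]; auto. exfalso.
  assert (Hpos : 0 < Rabs (l - l')) by (apply Rabs_pos_lt; lra).
  set (e := Rabs (l - l') / 4).
  assert (He : 0 < e) by (unfold e; lra).
  destruct (Ha e He) as [g [h [Hg [Hh Hgh]]]].
  pose proof (Rabs_le_inv _ _ (P e g h He Hg Hh Hgh)).
  pose proof (Rabs_le_inv _ _ (P' e g h He Hg Hh Hgh)).
  assert (Rabs (l - l') <= 2 * e) by (apply Rabs_le; lra).
  unfold e in *. lra.
Qed.

Lemma Lext_spec f : approx_by_Qb_diff f -> limit_value f (Lext f).
Proof. intros Ha. unfold Lext. apply epsilon_spec, limit_value_exists, Ha. Qed.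

(* On Q_b the extension is the certainty equivalent (f = f - 0). *)
Lemma Lext_Qb f : in_Qb f -> Lext f = CE f.
Proof.
  intros Hf.
  assert (Ha : approx_by_Qb_diff f).
  { intros eps He. exists f, (cst 0). split; [|split]; auto using Qb_const.
    intros p Hp. unfold cst. rewrite Rminus_0_r, Rminus_diag, Rabs_R0; lra. }
  apply (limit_value_unique f); auto using Lext_spec.
  intros eps g h He Hg Hh Hgh.
  assert (L := CE_diff_lipschitz f (cst 0) g h eps Hf (Qb_const 0) Hg Hh
     ltac:(intros p Hp; unfold cst; rewrite Rminus_0_r; auto)).
  rewrite CE_const, Rminus_0_r in L. exact L.
Qed.

Lemma le_of_le_plus_eps x eps K : 0 <= K -> (forall e, 0 < e -> x <= eps + K * e) -> x <= eps.
Proof.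
  intros HK H. destruct (Rle_dec x eps) as [|Hn]; auto. exfalso.
  set (e := (x - eps) / (2 * (K + 1))).
  assert (He : (K + 1) * e = (x - eps) / 2) by (unfold e; field; lra).
  assert (Hp : 0 < e) by (unfold e; apply Rdiv_lt_0_compat; lra).
  specialize (H e Hp). nra.
Qed.

(* Linearity: approximate f1, f2 within e and use the [comb] witnesses, on which
   CE g - CE h is exactly linear; then let e go to 0. *)
Lemma Lext_lin f1 f2 a b : approx_by_Qb_diff f1 -> approx_by_Qb_diff f2 ->
  Lext (fun p => a * f1 p + b * f2 p) = a * Lext f1 + b * Lext f2.
Proof.
  intros H1 H2.
  apply (limit_value_unique (fun p => a * f1 p + b * f2 p));
    auto using approx_by_Qb_diff_lin, Lext_spec.
  intros eps g h He Hg Hh Hgh.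
  pose proof (Rabs_pos a). pose proof (Rabs_pos b).
  apply le_of_le_plus_eps with (K := 2 * (Rabs a + Rabs b)); [lra|].
  intros e He'.
  destruct (H1 e He') as [g1 [h1 [Q1 [R1 A1]]]].
  destruct (H2 e He') as [g2 [h2 [Q2 [R2 A2]]]].
  set (g' := comb a b g1 h1 g2 h2). set (h' := comb a b h1 g1 h2 g2).
  assert (Qg' : in_Qb g') by (apply Qb_comb; auto).
  assert (Qh' : in_Qb h') by (apply Qb_comb; auto).
  assert (L1 : Rabs ((CE g - CE h) - (CE g' - CE h')) <= eps + (Rabs a + Rabs b) * e).
  { apply CE_diff_lipschitz; auto.
    intros p Hp. apply (Rabs_sub_tri (a * f1 p + b * f2 p)); auto. apply comb_approx; auto. }
  assert (L2 : Rabs (a * Lext f1 + b * Lext f2 - (CE g' - CE h')) <= (Rabs a + Rabs b) * e).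
  { unfold g', h'. rewrite CE_comb_sub; auto.
    replace (a * Lext f1 + b * Lext f2 - (a * (CE g1 - CE h1) + b * (CE g2 - CE h2)))
      with (a * (Lext f1 - (CE g1 - CE h1)) + b * (Lext f2 - (CE g2 - CE h2))) by ring.
    apply Rabs_lin_le; [apply (Lext_spec f1 H1) | apply (Lext_spec f2 H2)]; auto. }
  apply Rabs_le_inv in L1. apply Rabs_le_inv in L2. apply Rabs_le. lra.
Qed.

(* Norm bound |Lext f| <= sup |f|: compare an approximation g - h with 0 - 0. *)
Lemma Lext_bound f M : approx_by_Qb_diff f -> (forall p, unit_int p -> Rabs (f p) <= M) ->
  Rabs (Lext f) <= M.
Proof.
  intros Hf HM. apply le_of_le_plus_eps with (K := 2); [lra|]. intros e He.
  destruct (Hf e He) as [g [h [Q [R1 H]]]].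
  assert (L := CE_diff_lipschitz g h (cst 0) (cst 0) (M + e) Q R1 (Qb_const 0) (Qb_const 0)
     ltac:(intros p Hp; unfold cst;
           pose proof (Rabs_le_inv _ _ (H p Hp)); pose proof (Rabs_le_inv _ _ (HM p Hp));
           apply Rabs_le; lra)).
  rewrite CE_const in L.
  pose proof (Rabs_le_inv _ _ (Lext_spec f Hf e g h He Q R1 H)).
  apply Rabs_le_inv in L. apply Rabs_le. lra.
Qed.

Lemma Lext_represents : cont_linear_functional Lext /\ represents_on_Qb Lext pref.
Proof.
  split; [split|].
  - intros f g a b Hf Hg. apply Lext_lin; auto using B_approx_by_Qb_diff.
  - exists 1. intros f M Hf HM. rewrite Rmult_1_l. apply Lext_bound; auto using B_approx_by_Qb_diff.
  - intros f g Hf Hg. rewrite !Lext_Qb; auto. apply CE_represents; auto.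
Qed.

End CertaintyEquivalent.

End Preference.

Theorem mainTheorem9 (pref : (R -> R) -> (R -> R) -> Prop) :
  total_preorder_Qb pref ->
  continuous_pref pref ->
  monotonic_pref pref ->
  dual_independence pref ->
  exists L : (R -> R) -> R,
    cont_linear_functional L /\ represents_on_Qb L pref.
Proof.
  intros HT HC HM HD.
  destruct (classic (exists c d, strict pref (cst c) (cst d))) as [[c [d Hcd]] | Hnone].
  -
    assert (Hconst : forall x y, y < x -> strict pref (cst x) (cst y))
      by (eapply const_strict_spread; eauto).
    exists (Lext pref). eapply Lext_represents; eauto.
  -
    exists (fun _ => 0). split; [split|].
    + intros; ring.
    + exists 0. intros f M _ _. rewrite Rabs_R0. lra.
    + eapply zero_represents; eauto.
Qed.
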